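(* Consider the network-preserving differential algebraic model \[ \dot\theta_G=\omega_G,\qquad M\dot\omega_G=-A\omega_G-B_G\Gamma\sin(B^T\theta)+u,\qquad 0=-B_L\Gamma\sin(B^T\theta)+p^\ast, \] with $\theta=\begin{bmatrix}\theta_G^T & \theta_L^T\end{bmatrix}^T$, and the reduced ordinary differential model \[ \dot\eta=B_S^T(\eta)\,\omega_G,\qquad M\dot\omega_G=-A\omega_G-B_G\Gamma\sin(\eta)+u, \] with state $(\eta,\omega_G)\in\operatorname{im}B^T\times\mathbb{R}^{n_g}$. For given $u$ and $p^\ast$: (i) Let $(\theta_G,\theta_L,\omega_G)$ be a solution of the differential algebraic model on $\mathcal{I}=[0,T)$ with $B^T\theta(t)\in\Omega$ for all $t\in\mathcal{I}$. Then $(\eta,\omega_G)$ with $\eta=B^T\theta$ is a solution of the reduced model on $\mathcal{I}$. (ii) Let $(\eta,\omega_G)$ be a solution of the reduced model on $\mathcal{I}=[0,T)$, and assume $\eta(0)$ is a compatible initial condition, i.e. $\eta(0)\in\{v\in\operatorname{im}B^T \mid 0=p^\ast-B_L\Gamma\sin(v)\}$. Then there exists $\theta=\begin{bmatrix}\theta_G^T & \theta_L^T\end{bmatrix}^T$ with $B^T\theta=\eta$ such that $(\theta_G,\theta_L,\omega_G)$ is a solution of the differential algebraic model on $\mathcal{I}$.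
   Context: A power network is modeled on a connected undirected graph with $n$ nodes and $m$ edges; the nodes are partitioned into $n_g$ generator nodes and $n_\ell$ load nodes. $B\in\mathbb{R}^{n\times m}$ is an incidence matrix, partitioned row-wise as $B=\begin{bmatrix}B_G^T & B_L^T\end{bmatrix}^T$ (generator rows $B_G$, load rows $B_L$). $\Gamma=\mathrm{diag}(\gamma_k)$ is positive definite ($\gamma_k=X_{ij}^{-1}V_iV_j$ for edge $k=\{i,j\}$), $M$ and $A$ are positive definite diagonal matrices, $u\in\mathbb{R}^{n_g}$ is the generation input and $p^\ast\in\mathbb{R}^{n_\ell}$ is a constant vector of load powers. $\sin$ and $\cos$ act elementwise, $[\cos(\eta)]=\mathrm{diag}(\cos(\eta_k))$, $\Omega=(-\frac{\pi}{2},\frac{\pi}{2})^m$, $\Gamma'(\eta)=\Gamma[\cos(\eta)]$, and the (state-dependent) projected incidence matrix is $B_S(\eta)=B_G\big(I-\Gamma'(\eta)B_L^T(B_L\Gamma'(\eta)B_L^T)^{-1}B_L\big)$. *)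

From HB Require Import structures.
From mathcomp Require Import all_boot all_order all_algebra.
From mathcomp Require Import all_classical all_reals all_analysis.
Set Implicit Arguments. Unset Strict Implicit. Unset Printing Implicit Defensive.
Import Order.TTheory GRing.Theory Num.Theory.
Import numFieldNormedType.Exports.
Local Open Scope classical_set_scope.
Local Open Scope ring_scope.

Section Defs.
Variable R : realType.

Definition in_I (T : \bar R) (t : R) : Prop := 0 <= t /\ (t%:E < T)%E.

(* f' is the derivative of f on I = [0,T) (relative to I: one-sided at 0) *)
Definition has_deriv_on (n : nat) (T : \bar R) (f f' : R -> 'cV[R]_n) : Prop :=
  forall t, in_I T t ->
    (fun h : R => h^-1 *: (f (t + h) - f t))
      @ within (fun h : R => in_I T (t + h)) 0^' --> f' t.

Definition incidence (n m : nat) (B : 'M[R]_(n, m)) : Prop :=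
  forall k : 'I_m, exists i j : 'I_n,
    [/\ i != j, B i k = 1, B j k = -1 & forall l, l != i -> l != j -> B l k = 0].

Definition inc_adj (n m : nat) (B : 'M[R]_(n, m)) : rel 'I_n :=
  fun i j => [exists k, (B i k != 0) && (B j k != 0)].

Definition inc_connected (n m : nat) (B : 'M[R]_(n, m)) : Prop :=
  forall i j : 'I_n, connect (inc_adj B) i j.

Definition in_Omega (m : nat) (x : 'cV[R]_m) : Prop :=
  forall k : 'I_m, - (pi / 2) < x k 0 < pi / 2.

Definition sinv (m : nat) (x : 'cV[R]_m) : 'cV[R]_m := map_mx sin x.

Definition Gammap (m : nat) (gamma : 'rV[R]_m) (eta : 'cV[R]_m) : 'M[R]_m :=
  diag_mx gamma *m diag_mx (map_mx cos eta)^T.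

Definition Lmat (nl m : nat) (BL : 'M[R]_(nl, m)) gamma (eta : 'cV[R]_m) :=
  BL *m Gammap gamma eta *m BL^T.

Definition BS (ng nl m : nat) (B : 'M[R]_(ng + nl, m)) gamma (eta : 'cV[R]_m)
  : 'M[R]_(ng, m) :=
  usubmx B *m (1%:M - Gammap gamma eta *m (dsubmx B)^T
                 *m invmx (Lmat (dsubmx B) gamma eta) *m dsubmx B).

Definition dae_solution (ng nl m : nat) (B : 'M[R]_(ng + nl, m))
  (gamma : 'rV[R]_m) (Mv Av : 'rV[R]_ng) (u : R -> 'cV[R]_ng) (p : 'cV[R]_nl)
  (T : \bar R) (thG : R -> 'cV[R]_ng) (thL : R -> 'cV[R]_nl)
  (w : R -> 'cV[R]_ng) : Prop :=
  [/\ has_deriv_on T thG w,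
      (exists dthL, has_deriv_on T thL dthL),
      (exists dw, has_deriv_on T w dw /\
         forall t, in_I T t ->
           diag_mx Mv *m dw t =
             - (diag_mx Av *m w t)
             - usubmx B *m diag_mx gamma *m sinv (B^T *m col_mx (thG t) (thL t))
             + u t)
    & forall t, in_I T t ->
        0 = - (dsubmx B *m diag_mx gamma *m sinv (B^T *m col_mx (thG t) (thL t)))
            + p].

(* solution of the reduced ODE model on [0,T), state in im B^T x R^ng;
   the vector field must be defined along the solution (B_L Gamma' B_L^T
   invertible). *)
Definition reduced_solution (ng nl m : nat) (B : 'M[R]_(ng + nl, m))
  (gamma : 'rV[R]_m) (Mv Av : 'rV[R]_ng) (u : R -> 'cV[R]_ng)
  (T : \bar R) (eta : R -> 'cV[R]_m) (w : R -> 'cV[R]_ng) : Prop :=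
  [/\ (forall t, in_I T t -> exists th : 'cV[R]_(ng + nl), eta t = B^T *m th),
      (forall t, in_I T t -> Lmat (dsubmx B) gamma (eta t) \in unitmx),
      has_deriv_on T eta (fun t => (BS B gamma (eta t))^T *m w t)
    & exists dw, has_deriv_on T w dw /\
         forall t, in_I T t ->
           diag_mx Mv *m dw t =
             - (diag_mx Av *m w t) - usubmx B *m diag_mx gamma *m sinv (eta t)
             + u t].

End Defs.

From HB Require Import structures.
From mathcomp Require Import all_boot all_order all_algebra.
From mathcomp Require Import all_classical all_reals all_analysis.
From mathcomp Require Import ring lra.
Set Implicit Arguments. Unset Strict Implicit. Unset Printing Implicit Defensive.
Import Order.TTheory GRing.Theory Num.Theory.
Import numFieldNormedType.Exports.
Local Open Scope classical_set_scope.
Local Open Scope ring_scope.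

(* Since the graph is connected and has a generator node, B_L^T is injective,
   so B_L Γ'(η) B_L^T is invertible whenever Γ'(η) is positive definite, e.g.
   for η ∈ Ω.
   (i) Differentiating the algebraic constraint gives B_L Γ'(η) B^T θ' = 0,
   which determines θ_L' from θ_G' = ω_G; substituting into η' = B^T θ'
   gives η' = B_S(η)^T ω_G.
   (ii) Conversely B_L Γ'(η) B_S(η)^T = 0, so the constraint residual
   p* - B_L Γ sin η has zero derivative along the reduced flow and keeps its
   initial value 0.  The phases are recovered from η up to their common mode:
   with the invertible matrix K = B B^T + e_i e_i^T, the vector K^-1 B B^T θ
   is θ - θ_i 1, so θ := c 1 + K^-1 B η works once c is a primitive of the
   i-th generator frequency. *)

Lemma cvg_mxP {R : realFieldType} m n (U : Type) (F : set_system U) {FF : Filter F}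
  (f : U -> 'M[R]_(m, n)) (l : 'M[R]_(m, n)) :
  f @ F --> l <-> forall i j, (fun x => f x i j) @ F --> l i j.
Proof.
split=> [fl i j|fl]; first exact: cvg_comp _ _ fl (@coord_continuous _ _ _ i j l).
apply/cvgrPdist_le => /= e e0.
have : \forall x \near F, forall ij : 'I_m * 'I_n,
    `|l ij.1 ij.2 - f x ij.1 ij.2| <= e.
  by apply: filter_forall => ij; move/cvgrPdist_le : (fl ij.1 ij.2) => /(_ _ e0).
apply: filterS => x H.
rewrite /Num.Def.normr/= mx_normrE (bigmax_le _ (ltW e0))//= => ij _.
by rewrite !mxE.
Qed.

Lemma cvg_sin_quotient {R : realType} (a : R) :
  (fun h : R => h^-1 * (sin (a + h) - sin a)) @ 0^' --> cos a.
Proof.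
have := @derivable_sin R a; rewrite /derivable.
rewrite -[lim _]/(derive sin a 1) derive_val.
apply: cvg_trans; apply: near_eq_cvg; near=> h.
by rewrite /= -[h *: 1]/(h * 1) mulr1 (addrC h a).
Unshelve. all: by end_near. Qed.

Lemma cvg_sin_quotient_comp {R : realType} (U : set_system R) {FU : Filter U}
  (g : R -> R) (a g' : R) :
  (fun h => h) @ U --> (0:R) -> (\forall h \near U, h != 0) ->
  (fun h => h^-1 * (g h - a)) @ U --> g' ->
  (fun h => h^-1 * (sin (g h) - sin a)) @ U --> cos a * g'.
Proof.
move=> h0 hn0 qg.
pose S (d : R) := if d == 0 then cos a else d^-1 * (sin (a + d) - sin a).
have Sc : S @ (0:R) --> cos a.
  have -> : cos a = S 0 by rewrite /S eqxx.
  apply/continuous_withinNx; rewrite {2}/S eqxx.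
  apply: cvg_trans _ (@cvg_sin_quotient _ a); apply: near_eq_cvg; near=> d.
  have : d != 0 by near: d; exact: nbhs_dnbhs_neq.
  by rewrite /S => /negbTE ->.
have gD : (fun h => g h - a) @ U --> (0:R).
  have : (fun h => h * (h^-1 * (g h - a))) @ U --> 0 * g' by apply: cvgM.
  rewrite mul0r; apply: cvg_trans; apply: near_eq_cvg.
  by apply: filterS hn0 => h /= hn; rewrite mulrA mulfV // mul1r.
apply: cvg_trans _ (cvgM (cvg_comp _ _ gD Sc) qg).
apply: near_eq_cvg; apply: filterE => h /=.
set d := g h - a; have -> : g h = a + d by rewrite /d addrC subrK.
rewrite /S; have [->|dn0] := eqVneq d 0; first by rewrite !addr0 subrr !mulr0.
by rewrite mulrAC mulrCA mulVf // mulr1.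
Unshelve. all: by end_near. Qed.

Lemma is_derive_quotient {R : realFieldType} (g : R -> R) x l :
  (fun h => h^-1 * (g (x + h) - g x)) @ (0:R)^' --> l -> is_derive x 1 g l.
Proof.
move=> gl.
have gl' : (fun h : R => h^-1 *: ((g \o shift x) (h *: 1) - g x)) @ 0^' --> l.
  apply: cvg_trans _ gl; apply: near_eq_cvg; near=> h.
  by rewrite /= -[h *: 1]/(h * 1) mulr1 (addrC x h).
exact: DeriveDef (cvgP _ gl') (cvg_lim (@Rhausdorff R) gl').
Unshelve. all: by end_near. Qed.

Section OneSidedDerivatives.
Context {R : realType} (T : \bar R).

Definition dnbhs_I (t : R) := within (fun h : R => in_I T (t + h)) (0:R)^'.

Lemma near_dnbhs_IP t (P : R -> Prop) :
  (\forall h \near dnbhs_I t, P h) <->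
  exists2 d : R, 0 < d & forall h, `|h| < d -> h != 0 -> in_I T (t + h) -> P h.
Proof.
rewrite near_withinE; split.
- move=> /nbhs_ballP [d d0 Hd]; exists d => // h hd h0 It.
  by apply: (Hd h) => //; rewrite /ball /= sub0r normrN.
- move=> [d d0 Hd]; apply/nbhs_ballP; exists d => // h /= hd h0 It.
  by apply: Hd => //; move: hd; rewrite /ball /= sub0r normrN.
Qed.

Lemma in_I_right x : in_I T x ->
  exists2 e : R, 0 < e & forall h, 0 <= h < e -> in_I T (x + h).
Proof.
move=> [x0 xT]; case: T xT => [TT| |] //= xT.
- rewrite lte_fin in xT; exists (TT - x); first by rewrite subr_gt0.
  move=> h /andP [h0 he]; split; first by rewrite addr_ge0.
  by rewrite lte_fin -ltrBrDl.
- exists 1 => // h /andP [h0 _]; split; [by rewrite addr_ge0|by rewrite ltry].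
Qed.

Lemma in_I_ball x : 0 < x -> (x%:E < T)%E ->
  exists2 e : R, 0 < e & forall h, `|h| < e -> in_I T (x + h).
Proof.
move=> x0 xT; case: T xT => [TT| |] //= xT.
- rewrite lte_fin in xT; exists (Num.min x (TT - x)).
    by rewrite lt_min x0 subr_gt0.
  move=> h; rewrite lt_min => /andP [hx hT]; split.
    by move: (ler_norm (- h)); rewrite normrN => H; lra.
  by rewrite lte_fin; move: (ler_norm h) => H; lra.
- exists x => // h hx; split; last by rewrite ltry.
  by move: (ler_norm (- h)); rewrite normrN => H; lra.
Qed.

Lemma dnbhs_I_proper t : in_I T t -> ProperFilter (dnbhs_I t).
Proof.
move=> It; apply: Build_ProperFilter_ex => P /near_dnbhs_IP [d d0 Hd].
have [r r0 Hr] := in_I_right It.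
pose e := Num.min (d / 2) (r / 2).
have e0 : 0 < e by rewrite lt_min !divr_gt0.
have ltr_half (a : R) : 0 < a -> a / 2 < a.
  by move=> a0; rewrite ltr_pdivrMr // ltr_pMr // ltr1n.
exists e; apply: Hd; first by rewrite gtr0_norm // gt_min ltr_half.
  by rewrite gt_eqF.
by apply: Hr; rewrite (ltW e0) gt_min ltr_half ?orbT.
Qed.

Lemma cvg_dnbhs_I_id t : (fun h : R => h) @ dnbhs_I t --> (0 : R).
Proof. by apply: cvg_within_filter; apply: cvg_within_filter; exact: cvg_id. Qed.

Lemma dnbhs_I_neq0 t : \forall h \near dnbhs_I t, h != 0.
Proof. by apply/near_dnbhs_IP; exists 1. Qed.

Lemma dnbhs_I_interior x : 0 < x -> (x%:E < T)%E -> (0:R)^' `=>` dnbhs_I x.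
Proof.
move=> x0 xT P /near_dnbhs_IP [d d0 Hd].
have [e e0 He] := in_I_ball x0 xT.
apply/nbhs_ballP; exists (Num.min d e); first by rewrite /= lt_min d0 e0.
move=> h /=; rewrite /ball /= sub0r normrN lt_min => /andP [hd he] hn0.
exact: Hd hd hn0 (He h he).
Qed.

Lemma dnbhs_I_right0 : (0%:E < T)%E -> (0:R)^'+ `=>` dnbhs_I 0.
Proof.
move=> T0 P /near_dnbhs_IP [d d0 Hd].
have [e e0 He] := in_I_right (conj (lexx 0) T0).
apply/nbhs_ballP; exists (Num.min d e); first by rewrite /= lt_min d0 e0.
move=> h /=; rewrite /ball /= sub0r normrN lt_min => /andP [hd he] hp.
apply: Hd => //; first by rewrite gt_eqF.
by apply: He; rewrite (ltW hp) /= -(gtr0_norm hp).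
Qed.

Definition has_rderiv_on (g g' : R -> R) := forall t, in_I T t ->
  (fun h => h^-1 * (g (t + h) - g t)) @ dnbhs_I t --> g' t.

Section ScalarDerivative.
Variables (g g' : R -> R).
Hypothesis gg' : has_rderiv_on g g'.

Lemma has_rderiv_cvg t : in_I T t -> (fun h => g (t + h)) @ dnbhs_I t --> g t.
Proof.
move=> It.
have : (fun h => h * (h^-1 * (g (t + h) - g t)) + g t) @ dnbhs_I t
    --> 0 * g' t + g t.
  by apply: cvgD; [apply: cvgM; [exact: cvg_dnbhs_I_id|exact: gg'] | exact: cvg_cst].
rewrite mul0r add0r; apply: cvg_trans; apply: near_eq_cvg.
apply: filterS (dnbhs_I_neq0 t) => h /= hn0.
by rewrite mulrA mulfV // mul1r subrK.
Qed.

Lemma has_rderiv_is_derive x : 0 < x -> (x%:E < T)%E -> is_derive x 1 g (g' x).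
Proof.
move=> x0 xT; apply: is_derive_quotient.
have Ix : in_I T x by split; [exact: ltW|].
exact: cvg_trans (cvg_fmap2 (dnbhs_I_interior x0 xT)) (gg' Ix).
Qed.

Lemma has_rderiv_continuous x : 0 < x -> (x%:E < T)%E -> {for x, continuous g}.
Proof.
move=> x0 xT; have D := has_rderiv_is_derive x0 xT.
exact/differentiable_continuous/derivable1_diffP/(@ex_derive _ _ _ _ _ _ _ D).
Qed.

Lemma has_rderiv_cvg0 : (0%:E < T)%E -> g @ (0:R)^'+ --> g 0.
Proof.
move=> T0; have := has_rderiv_cvg (conj (lexx 0) T0).
under eq_fun do rewrite add0r.
exact: cvg_trans (cvg_fmap2 (dnbhs_I_right0 T0)).
Qed.

Lemma continuous_clamp0 s : (0%:E < T)%E -> (s%:E < T)%E ->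
  {for s, continuous (fun u : R => g (Num.max u 0))}.
Proof.
move=> T0 sT; rewrite /prop_for /continuous_at.
have [sn|sp|->] := ltgtP s 0.
- apply: (@cvg_trans _ ((fun _ : R => g 0) @ nbhs s)); last exact: cvg_cst.
  apply: near_eq_cvg; near=> u.
  have un : u < 0 by near: u; exact: lt_nbhsl.
  by rewrite /= (max_idPr (ltW un)).
- apply: (@cvg_trans _ (g @ nbhs s)); last exact: has_rderiv_continuous sp sT.
  apply: near_eq_cvg; near=> u.
  have up : 0 < u by near: u; exact: lt_nbhsr.
  by rewrite /= (max_idPl (ltW up)).
- apply/cvgrPdist_lt => e e0.
  have I0 : in_I T 0 by [].
  have /cvgrPdist_lt /(_ e e0) /near_dnbhs_IP [d d0 Hd] := has_rderiv_cvg I0.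
  have [r r0 Hr] := in_I_right I0.
  apply/nbhs_ballP; exists (Num.min d r); first by rewrite /= lt_min d0 r0.
  move=> u; rewrite /ball /= sub0r normrN lt_min => /andP [ud ur].
  have [un|up] := leP u 0; first by rewrite subrr normr0.
  have := Hd u ud (lt0r_neq0 up); rewrite !add0r; apply.
  by have := Hr u; rewrite add0r; apply; rewrite (ltW up) /= -(gtr0_norm up).
Unshelve. all: by end_near. Qed.

(* Integrating from -1 rather than from 0 puts every point of [0, T) in the
   interior of the domain of integration, as [continuous_FTC1] requires. *)
Lemma has_rderiv_primitive : (0%:E < T)%E -> exists c, has_rderiv_on c g.
Proof.
move=> T0; pose ft u := g (Num.max u 0).
pose c x := (\int[lebesgue_measure]_(t in [set` Interval (BLeft (-1)) (BRight x)])
  (ft t))%R.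
exists c => x Ix; have [e e0 He] := in_I_right Ix; have [x0 _] := Ix.
pose u := x + e / 2.
have xu : x < u by rewrite /u ltrDl divr_gt0.
have uT : (u%:E < T)%E.
  apply: (proj2 (He (e / 2) _)).
  by rewrite ltW ?divr_gt0 //= ltr_pdivrMr // ltr_pMr // ltr1n.
have fc y : y <= u -> {for y, continuous ft}.
  by move=> yu; apply: continuous_clamp0 => //; apply: le_lt_trans uT; rewrite lee_fin.
have int : lebesgue_measure.-integrable
    [set` Interval (BLeft (-1)) (BRight u)] (EFin \o ft).
  apply: continuous_compact_integrable; first exact: segment_compact.
  apply: continuous_in_subspaceT => y; rewrite inE /= in_itv /= => /andP [_ yu].
  exact: fc.
have [|D1 D2] := @continuous_FTC1 R ft (BLeft (-1)) x u xu int _ (fc x (ltW xu)).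
  by rewrite /= lte_fin; lra.
have -> : g x = derive c x 1 by rewrite -derive1E D2 /ft (max_idPl x0).
apply: cvg_within_filter; apply: cvg_trans _ D1; apply: near_eq_cvg; near=> h.
by rewrite /= -[h *: 1]/(h * 1) mulr1 (addrC h x).
Unshelve. all: by end_near. Qed.

End ScalarDerivative.

Lemma has_rderiv0_const g : has_rderiv_on g (fun _ => 0) ->
  forall t, in_I T t -> g t = g 0.
Proof.
move=> g0 t [t0 tT].
have T0 : (0%:E < T)%E by apply: le_lt_trans tT; rewrite lee_fin.
have [->//|tn0] := eqVneq t 0.
have tp : 0 < t by rewrite lt_neqAle eq_sym tn0 t0.
have inT x : x < t -> (x%:E < T)%E by move=> xt; apply: lt_trans tT; rewrite lte_fin.
have Hd x : x \in `]0, t[ -> is_derive x 1 g 0.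
  by rewrite in_itv /= => /andP [x0 xt]; have := has_rderiv_is_derive g0 x0 (inT x xt).
have Hc : {within `[0, t], continuous g}.
  apply/continuous_within_itvP => //; split.
  + move=> x; rewrite in_itv /= => /andP [x0 xt].
    by have := has_rderiv_continuous g0 x0 (inT x xt).
  + exact: has_rderiv_cvg0 g0 T0.
  + by apply: cvg_within_filter; have := has_rderiv_continuous g0 tp tT.
have [c _] := MVT_segment t0 Hd Hc.
by rewrite mul0r => /eqP; rewrite subr_eq0 => /eqP.
Qed.

Lemma has_deriv_on_coord n (f f' : R -> 'cV[R]_n) i :
  has_deriv_on T f f' -> has_rderiv_on (fun t => f t i 0) (fun t => f' t i 0).
Proof.
move=> ff' t It; have /cvg_mxP /(_ i 0) := ff' t It.
by under eq_fun do rewrite !mxE.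
Qed.

Lemma has_deriv_onZl n (c c' : R -> R) (v : 'cV[R]_n) :
  has_rderiv_on c c' -> has_deriv_on T (fun t => c t *: v) (fun t => c' t *: v).
Proof.
move=> cc' t It.
have -> : (fun h : R => h^-1 *: (c (t + h) *: v - c t *: v)) =
    (fun h => (h^-1 * (c (t + h) - c t)) *: v).
  by apply/funext => h; rewrite -scalerBl scalerA.
exact: cvgZr_tmp (cc' t It).
Qed.

Lemma has_deriv_on_eq n (f f' f'' : R -> 'cV[R]_n) :
  has_deriv_on T f f' -> (forall t, in_I T t -> f' t = f'' t) ->
  has_deriv_on T f f''.
Proof. by move=> ff' E t It; rewrite -E //; exact: ff'. Qed.

Lemma has_deriv_onD n (f f' g g' : R -> 'cV[R]_n) :
  has_deriv_on T f f' -> has_deriv_on T g g' ->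
  has_deriv_on T (fun t => f t + g t) (fun t => f' t + g' t).
Proof.
move=> ff' gg' t It.
have -> : (fun h : R => h^-1 *: (f (t + h) + g (t + h) - (f t + g t))) =
    (fun h => h^-1 *: (f (t + h) - f t) + h^-1 *: (g (t + h) - g t)).
  by apply/funext => h /=; rewrite -scalerDr addrACA opprD.
exact: cvgD (ff' t It) (gg' t It).
Qed.

Lemma has_deriv_onN n (f f' : R -> 'cV[R]_n) :
  has_deriv_on T f f' -> has_deriv_on T (fun t => - f t) (fun t => - f' t).
Proof.
move=> ff' t It.
have -> : (fun h : R => h^-1 *: (- f (t + h) - - f t)) =
    (fun h => - (h^-1 *: (f (t + h) - f t))).
  by apply/funext => h /=; rewrite -scalerN opprB addrC opprK.
exact: cvgN (ff' t It).
Qed.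

Lemma has_deriv_on_cst n (c : 'cV[R]_n) : has_deriv_on T (fun _ => c) (fun _ => 0).
Proof.
move=> t It; have -> : (fun h : R => h^-1 *: (c - c)) = fun _ => 0.
  by apply/funext => h; rewrite subrr scaler0.
exact: cvg_cst.
Qed.

Lemma has_deriv_on_mulmx n k (A : 'M[R]_(k, n)) (f f' : R -> 'cV[R]_n) :
  has_deriv_on T f f' ->
  has_deriv_on T (fun t => A *m f t) (fun t => A *m f' t).
Proof.
move=> ff' t It.
have -> : (fun h : R => h^-1 *: (A *m f (t + h) - A *m f t)) =
    (fun h => A *m (h^-1 *: (f (t + h) - f t))).
  by apply/funext => h; rewrite -mulmxBr scalemxAr.
have /cvg_mxP ff't := ff' t It.
apply/cvg_mxP => i j; rewrite mxE; under eq_fun do rewrite mxE.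
apply: cvg_big; first exact: add_continuous.
by move=> l _; apply: cvgMl_tmp; exact: ff't.
Qed.

Lemma has_deriv_on_col_mx n1 n2 (f f' : R -> 'cV[R]_n1) (g g' : R -> 'cV[R]_n2) :
  has_deriv_on T f f' -> has_deriv_on T g g' ->
  has_deriv_on T (fun t => col_mx (f t) (g t)) (fun t => col_mx (f' t) (g' t)).
Proof.
have col_mxE (a : R -> 'cV[R]_n1) (b : R -> 'cV[R]_n2) :
    (fun t => col_mx (a t) (b t)) =
    (fun t => col_mx 1%:M 0 *m a t + col_mx 0 1%:M *m b t).
  apply/funext => t.
  by rewrite !mul_col_mx !mul1mx !mul0mx add_col_mx addr0 add0r.
move=> ff' gg'; rewrite (col_mxE f g) (col_mxE f' g').
by apply: has_deriv_onD; apply: has_deriv_on_mulmx.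
Qed.

Lemma has_deriv_on_usubmx n1 n2 (f f' : R -> 'cV[R]_(n1 + n2)) :
  has_deriv_on T f f' ->
  has_deriv_on T (fun t => usubmx (f t)) (fun t => usubmx (f' t)).
Proof.
have usubmxE (a : R -> 'cV[R]_(n1 + n2)) :
    (fun t => usubmx (a t)) = (fun t => row_mx 1%:M 0 *m a t).
  by apply/funext => t; rewrite -{2}[a t]vsubmxK mul_row_col mul1mx mul0mx addr0.
by rewrite !usubmxE; exact: has_deriv_on_mulmx.
Qed.

Lemma has_deriv_on_dsubmx n1 n2 (f f' : R -> 'cV[R]_(n1 + n2)) :
  has_deriv_on T f f' ->
  has_deriv_on T (fun t => dsubmx (f t)) (fun t => dsubmx (f' t)).
Proof.
have dsubmxE (a : R -> 'cV[R]_(n1 + n2)) :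
    (fun t => dsubmx (a t)) = (fun t => row_mx 0 1%:M *m a t).
  by apply/funext => t; rewrite -{2}[a t]vsubmxK mul_row_col mul1mx mul0mx add0r.
by rewrite !dsubmxE; exact: has_deriv_on_mulmx.
Qed.

Lemma has_deriv_on_sinv n (f f' : R -> 'cV[R]_n) :
  has_deriv_on T f f' ->
  has_deriv_on T (fun t => sinv (f t))
    (fun t => diag_mx (map_mx cos (f t))^T *m f' t).
Proof.
move=> ff' t It; have /cvg_mxP ff't := ff' t It.
apply/cvg_mxP => i j; rewrite (ord1 j) mul_diag_mx !mxE.
under eq_fun do rewrite !mxE.
apply: cvg_sin_quotient_comp; [exact: cvg_dnbhs_I_id|exact: dnbhs_I_neq0|].
by have := ff't i 0; under eq_fun do rewrite !mxE.
Qed.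

Lemma has_deriv_on_const_eq0 n (f f' : R -> 'cV[R]_n) (c : 'cV[R]_n) :
  has_deriv_on T f f' -> (forall t, in_I T t -> f t = c) ->
  forall t, in_I T t -> f' t = 0.
Proof.
move=> ff' fc t It; have := dnbhs_I_proper It => Pt.
have f0 : (fun h : R => h^-1 *: (f (t + h) - f t)) @ dnbhs_I t --> (0 : 'cV[R]_n).
  apply: (@cvg_trans _ ((fun _ : R => (0 : 'cV[R]_n)) @ dnbhs_I t));
    last exact: cvg_cst.
  apply: near_eq_cvg; apply/near_dnbhs_IP.
  by exists 1 => // h _ _ Ih; rewrite /= !fc // subrr scaler0.
have := fmap_proper_filter (fun h : R => h^-1 *: (f (t + h) - f t)) Pt => Pq.
exact: (@cvg_unique _ (@norm_hausdorff _ _) _ Pq _ _ (ff' t It) f0).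
Qed.

Lemma has_deriv_on0_const n (f : R -> 'cV[R]_n) :
  has_deriv_on T f (fun _ => 0) -> forall t, in_I T t -> f t = f 0.
Proof.
move=> f0 t It; apply/matrixP => i j; rewrite (ord1 j).
have fi0 : has_rderiv_on (fun t => f t i 0) (fun _ => 0).
  by move=> s Is; have := has_deriv_on_coord (i := i) f0 Is; rewrite mxE.
exact: has_rderiv0_const fi0 t It.
Qed.

End OneSidedDerivatives.

Lemma mulmx_incidence_col {R : pzRingType} n m (B : 'M[R]_(n, m)) (z : 'rV[R]_n) k i j :
  i != j -> B i k = 1 -> B j k = -1 ->
  (forall l, l != i -> l != j -> B l k = 0) ->
  (z *m B) 0 k = z 0 i - z 0 j.
Proof.
move=> ij Bi Bj Bl.
rewrite mxE (bigD1 i) //= (bigD1 j) /=; last by rewrite eq_sym.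
rewrite big1 => [|l /andP [li lj]]; last by rewrite Bl // mulr0.
by rewrite Bi Bj addr0 mulr1 mulrN1.
Qed.

Lemma weighted_gram_kernel {R : realFieldType} k m (C : 'M[R]_(k, m))
    (d : 'rV[R]_m) (v : 'rV[R]_k) :
  (forall l, 0 < d 0 l) -> v *m (C *m diag_mx d *m C^T) = 0 -> v *m C = 0.
Proof.
move=> dpos H; set y := v *m C.
have E : y *m diag_mx d *m y^T = 0.
  by rewrite /y trmx_mul !mulmxA -(mulmxA v C) -(mulmxA v) H mul0mx.
have S : \sum_l d 0 l * y 0 l ^+ 2 = 0.
  have := congr1 (fun M : 'M[R]_1 => M 0 0) E.
  have -> : (0 : 'M[R]_1) 0 0 = 0 by rewrite mxE.
  rewrite /= mxE => yy0; rewrite -[RHS]yy0.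
  by apply: eq_bigr => l _; rewrite mul_mx_diag !mxE; ring.
apply/rowP => l; rewrite [RHS]mxE.
have /eqP := @psumr_eq0P _ _ xpredT (fun l => d 0 l * y 0 l ^+ 2)
  (fun i _ => mulr_ge0 (ltW (dpos i)) (sqr_ge0 _)) S l isT.
by rewrite mulf_eq0 gt_eqF //= expf_eq0 /= => /eqP.
Qed.

Section IncidenceMatrices.
Context {R : realType}.

Lemma trmx_incidence_const n m (B : 'M[R]_(n, m)) :
  incidence B -> B^T *m (const_mx 1 : 'cV[R]_n) = 0.
Proof.
move=> inc; rewrite -[const_mx 1](trmx_const 1) -trmx_mul -trmx0; congr trmx.
apply/rowP => k; have [i [j [ij Bi Bj Bl]]] := inc k.
by rewrite (mulmx_incidence_col _ ij Bi Bj Bl) !mxE subrr.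
Qed.

Lemma incidence_left_kernel_const n m (B : 'M[R]_(n, m)) (z : 'rV[R]_n) :
  incidence B -> inc_connected B -> z *m B = 0 -> forall a b, z 0 a = z 0 b.
Proof.
move=> inc con zB.
have adj x y : inc_adj B x y -> z 0 x = z 0 y.
  move=> /existsP [k /andP [bx b_y]]; have [i [j [ij Bi Bj Bl]]] := inc k.
  have zij : z 0 i = z 0 j.
    by apply/eqP; rewrite -subr_eq0 -(mulmx_incidence_col _ ij Bi Bj Bl) zB mxE.
  have zi w : B w k != 0 -> z 0 w = z 0 i.
    move=> bw; have [->//|wi] := eqVneq w i; have [->//|wj] := eqVneq w j.
    by move: bw; rewrite Bl ?eqxx.
  by rewrite (zi _ bx) (zi _ b_y).
move=> a b; have /connectP [p pth ->] := con a b.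
elim: p a pth => [|c p IH] a //= /andP [ac pth].
by rewrite (adj _ _ ac); exact: IH.
Qed.

Lemma grounded_laplacian_unit ng nl m (B : 'M[R]_(ng + nl, m)) (d : 'rV[R]_m) :
  (0 < ng)%N -> incidence B -> inc_connected B -> (forall l, 0 < d 0 l) ->
  dsubmx B *m diag_mx d *m (dsubmx B)^T \in unitmx.
Proof.
move=> ng0 inc con dpos; rewrite unitmxE unitfE.
apply/negP => /det0P [v /eqP vn0 /(weighted_gram_kernel dpos) vB]; apply: vn0.
have zB : row_mx (0 : 'rV[R]_ng) v *m B = 0.
  by rewrite -[B]vsubmxK mul_row_col mul0mx add0r vB.
apply/rowP => l; have := incidence_left_kernel_const inc con zB
  (rshift ng l) (lshift nl (Ordinal ng0)).
by rewrite row_mxEr row_mxEl !mxE.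
Qed.

(* grounding node i0 makes the Laplacian B B^T invertible *)
Definition pinned_laplacian n m (B : 'M[R]_(n, m)) (i0 : 'I_n) :=
  B *m B^T + delta_mx i0 i0.

Lemma pinned_laplacian_unit n m (B : 'M[R]_(n, m)) i0 :
  incidence B -> inc_connected B -> pinned_laplacian B i0 \in unitmx.
Proof.
move=> inc con; rewrite unitmxE unitfE; apply/negP => /det0P [v /eqP vn0 Hv].
pose e : 'cV[R]_n := delta_mx i0 0.
have E : pinned_laplacian B i0 =
    row_mx B e *m diag_mx (const_mx 1) *m (row_mx B e)^T.
  by rewrite diag_const_mx mulmx1 tr_row_mx mul_row_col trmx_delta mul_delta_mx.
rewrite E in Hv; have := weighted_gram_kernel (d := const_mx 1) _ Hv.
rewrite mul_mx_row -row_mx0 => /(_ _) /eq_row_mx [|vB vi0].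
  by move=> l; rewrite mxE ltr01.
apply: vn0; apply/rowP => l.
rewrite (incidence_left_kernel_const inc con vB l i0) mxE.
by have := congr1 (fun M : 'M[R]_1 => M 0 0) vi0; rewrite -colE !mxE.
Qed.

Lemma pinned_laplacian_recover n m (B : 'M[R]_(n, m)) i0 (th : 'cV[R]_n) :
  incidence B -> inc_connected B ->
  invmx (pinned_laplacian B i0) *m B *m (B^T *m th) = th - th i0 0 *: const_mx 1.
Proof.
move=> inc con.
suff KE : pinned_laplacian B i0 *m (th - th i0 0 *: const_mx 1) = B *m (B^T *m th).
  by rewrite -mulmxA -KE mulKmx // pinned_laplacian_unit.
rewrite /pinned_laplacian mulmxBr -scalemxAr !mulmxDl -!mulmxA.
rewrite trmx_incidence_const // mulmx0 add0r.
have delta_mul (x : 'cV[R]_n) : delta_mx i0 i0 *m x = x i0 0 *: delta_mx i0 0.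
  apply/colP => j; rewrite !mxE (bigD1 i0) //= big1 => [|l li0].
    by rewrite !mxE eqxx andbT addr0 mulrC.
  by rewrite !mxE (negbTE li0) andbF mul0r.
by rewrite !delta_mul !mxE scale1r addrK.
Qed.

End IncidenceMatrices.

Section ProjectedIncidence.
Context {R : realType}.
Variables (ng nl m : nat) (B : 'M[R]_(ng + nl, m)) (gamma : 'rV[R]_m).

Lemma trmx_mul_col_mx (a : 'cV[R]_ng) (b : 'cV[R]_nl) :
  B^T *m col_mx a b = (usubmx B)^T *m a + (dsubmx B)^T *m b.
Proof. by rewrite -{1}[B]vsubmxK tr_col_mx mul_row_col. Qed.

Lemma GammapE (eta : 'cV[R]_m) :
  Gammap gamma eta = diag_mx (\row_k (gamma 0 k * cos (eta k 0))).
Proof.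
apply/matrixP => i j; rewrite /Gammap mul_diag_mx !mxE.
by case: (i == j); rewrite ?mulr1n ?mulr0n ?mulr0.
Qed.

Lemma mulmx_Gammap k (A : 'M[R]_(k, m)) (eta X : 'cV[R]_m) :
  A *m diag_mx gamma *m (diag_mx (map_mx cos eta)^T *m X) =
  A *m Gammap gamma eta *m X.
Proof. by rewrite /Gammap !mulmxA. Qed.

(* θ_L' determined by θ_G' = x through the differentiated load constraint *)
Definition load_rate (eta : 'cV[R]_m) (x : 'cV[R]_ng) : 'cV[R]_nl :=
  - (invmx (Lmat (dsubmx B) gamma eta) *m
       (dsubmx B *m Gammap gamma eta *m (usubmx B)^T *m x)).

Lemma trmx_BS_mul eta (x : 'cV[R]_ng) :
  (BS B gamma eta)^T *m x = B^T *m col_mx x (load_rate eta x).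
Proof.
have GT : (Gammap gamma eta)^T = Gammap gamma eta by rewrite GammapE tr_diag_mx.
have LT : (Lmat (dsubmx B) gamma eta)^T = Lmat (dsubmx B) gamma eta.
  by rewrite /Lmat trmx_mul trmxK trmx_mul GT mulmxA.
rewrite trmx_mul_col_mx /BS /load_rate.
move: (Lmat _ _ _) LT (Gammap _ _) GT => L LT G GT.
rewrite trmx_mul linearB /= trmx1 !trmx_mul trmxK GT trmx_inv LT.
by rewrite mulmxBl mul1mx mulmxBl mulmxN !mulmxA.
Qed.

Lemma load_rateP eta (x : 'cV[R]_ng) (y : 'cV[R]_nl) :
  Lmat (dsubmx B) gamma eta \in unitmx ->
  dsubmx B *m Gammap gamma eta *m (B^T *m col_mx x y) = 0 <->
  y = load_rate eta x.
Proof.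
rewrite trmx_mul_col_mx /load_rate /Lmat.
move: (Gammap _ _) (dsubmx B) (usubmx B) => G BL BG U.
have -> : BL *m G *m (BG^T *m x + BL^T *m y) =
    BL *m G *m BG^T *m x + BL *m G *m BL^T *m y by rewrite mulmxDr !mulmxA.
move: (BL *m G *m BL^T) U (BL *m G *m BG^T *m x) => L U a.
split=> [Ly|->]; last by rewrite mulmxN mulKVmx // subrr.
rewrite -mulmxN; apply: (canRL (mulKmx U)).
by apply/eqP; rewrite -addr_eq0 addrC Ly.
Qed.

Lemma Gammap_mul_trmx_BS eta (x : 'cV[R]_ng) :
  Lmat (dsubmx B) gamma eta \in unitmx ->
  dsubmx B *m Gammap gamma eta *m ((BS B gamma eta)^T *m x) = 0.
Proof. by move=> U; rewrite trmx_BS_mul; apply/load_rateP. Qed.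

End ProjectedIncidence.

Section Solutions.
Context {R : realType}.
Variables (ng nl m : nat) (B : 'M[R]_(ng + nl, m)) (gamma : 'rV[R]_m).
Variables (Mv Av : 'rV[R]_ng) (u : R -> 'cV[R]_ng) (p : 'cV[R]_nl) (T : \bar R).
Hypotheses (ng0 : (0 < ng)%N) (inc : incidence B) (con : inc_connected B).

Lemma has_deriv_on_constraint (eta eta' : R -> 'cV[R]_m) :
  has_deriv_on T eta eta' ->
  has_deriv_on T (fun t => - (dsubmx B *m diag_mx gamma *m sinv (eta t)) + p)
    (fun t => - (dsubmx B *m Gammap gamma (eta t) *m eta' t)).
Proof.
move=> eta_d.
have sin_d := has_deriv_on_mulmx (A := dsubmx B *m diag_mx gamma)
  (has_deriv_on_sinv eta_d).
apply: has_deriv_on_eq (has_deriv_onD (has_deriv_onN sin_d) (has_deriv_on_cst p)) _.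
move=> t _.
by rewrite addr0 mulmx_Gammap.
Qed.

Lemma Lmat_unit_Omega (eta : 'cV[R]_m) :
  (forall k, 0 < gamma 0 k) -> in_Omega eta -> Lmat (dsubmx B) gamma eta \in unitmx.
Proof.
move=> gpos Om; rewrite /Lmat GammapE; apply: grounded_laplacian_unit => // k.
by rewrite mxE mulr_gt0 //; apply: cos_gt0_pihalf; exact: Om.
Qed.

Lemma dae_reduced_solution thG thL w :
  (forall k, 0 < gamma 0 k) ->
  dae_solution B gamma Mv Av u p T thG thL w ->
  (forall t, in_I T t -> in_Omega (B^T *m col_mx (thG t) (thL t))) ->
  reduced_solution B gamma Mv Av u T (fun t => B^T *m col_mx (thG t) (thL t)) w.
Proof.
move=> gpos [thG_d [dthL thL_d] w_d constr] Om.
set eta := fun t => B^T *m col_mx (thG t) (thL t).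
have U t : in_I T t -> Lmat (dsubmx B) gamma (eta t) \in unitmx.
  by move=> It; apply: Lmat_unit_Omega gpos (Om t It).
have eta_d : has_deriv_on T eta (fun t => B^T *m col_mx (w t) (dthL t)).
  exact/has_deriv_on_mulmx/has_deriv_on_col_mx.
have dconstr := has_deriv_on_const_eq0 (has_deriv_on_constraint eta_d)
  (c := 0) (fun t It => esym (constr t It)).
split=> //; first by move=> t It; exists (col_mx (thG t) (thL t)).
apply: has_deriv_on_eq eta_d _ => t It.
have /eqP := dconstr t It; rewrite oppr_eq0 => /eqP.
by move/(load_rateP _ _ (U t It)) => ->; rewrite trmx_BS_mul.
Qed.

Lemma reduced_phase_lift (eta : R -> 'cV[R]_m) w dw :
  (0%:E < T)%E ->
  (forall t, in_I T t -> exists th : 'cV[R]_(ng + nl), eta t = B^T *m th) ->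
  has_deriv_on T eta (fun t => (BS B gamma (eta t))^T *m w t) ->
  has_deriv_on T w dw ->
  exists th : R -> 'cV[R]_(ng + nl),
    has_deriv_on T th (fun t => col_mx (w t) (load_rate B gamma (eta t) (w t))) /\
    forall t, in_I T t -> B^T *m th t = eta t.
Proof.
move=> T0 eta_im eta_d w_d.
pose j0 : 'I_ng := Ordinal ng0; pose i0 : 'I_(ng + nl) := lshift nl j0.
pose Q := invmx (pinned_laplacian B i0) *m B.
have [c c_d] := has_rderiv_primitive (has_deriv_on_coord (i := j0) w_d) T0.
exists (fun t => c t *: const_mx 1 + Q *m eta t); split => [|t It].
  apply: has_deriv_on_eq (has_deriv_onD (has_deriv_onZl (v := const_mx 1) c_d)
    (has_deriv_on_mulmx (A := Q) eta_d)) _ => t It.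
  rewrite trmx_BS_mul /Q pinned_laplacian_recover // col_mxEu.
  by rewrite addrC subrK.
have [th ->] := eta_im t It.
rewrite mulmxDr -scalemxAr trmx_incidence_const // scaler0 add0r.
rewrite /Q pinned_laplacian_recover // mulmxBr -scalemxAr.
by rewrite trmx_incidence_const // scaler0 subr0.
Qed.

Lemma reduced_dae_solution eta w :
  (0%:E < T)%E ->
  reduced_solution B gamma Mv Av u T eta w ->
  0 = p - dsubmx B *m diag_mx gamma *m sinv (eta 0) ->
  exists (thG : R -> 'cV[R]_ng) (thL : R -> 'cV[R]_nl),
    (forall t, in_I T t -> B^T *m col_mx (thG t) (thL t) = eta t) /\
    dae_solution B gamma Mv Av u p T thG thL w.
Proof.
move=> T0 [eta_im U eta_d [dw [w_d w_eq]]] constr0.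
have [th [th_d Bth]] := reduced_phase_lift T0 eta_im eta_d w_d.
exists (fun t => usubmx (th t)), (fun t => dsubmx (th t)).
have Beta t : in_I T t -> B^T *m col_mx (usubmx (th t)) (dsubmx (th t)) = eta t.
  by move=> It; rewrite vsubmxK Bth.
split=> //; split.
- by apply: has_deriv_on_eq (has_deriv_on_usubmx th_d) _ => t _; rewrite col_mxKu.
- exists (fun t => load_rate B gamma (eta t) (w t)).
  by apply: has_deriv_on_eq (has_deriv_on_dsubmx th_d) _ => t _; rewrite col_mxKd.
- by exists dw; split => // t It; rewrite Beta //; exact: w_eq.
move=> t It; rewrite Beta //.
have constr_d : has_deriv_on T
    (fun s => - (dsubmx B *m diag_mx gamma *m sinv (eta s)) + p) (fun _ => 0).
  apply: has_deriv_on_eq (has_deriv_on_constraint eta_d) _ => s Is.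
  by rewrite Gammap_mul_trmx_BS ?oppr0 ?U.
by rewrite (has_deriv_on0_const constr_d It) /= addrC.
Qed.

End Solutions.

Theorem theorem1 (R : realType) (ng nl m : nat) (B : 'M[R]_(ng + nl, m))
  (gamma : 'rV[R]_m) (Mv Av : 'rV[R]_ng) (u : R -> 'cV[R]_ng) (p : 'cV[R]_nl)
  (T : \bar R) :
  (0 < ng)%N ->
  incidence B -> inc_connected B ->
  (forall k, 0 < gamma 0 k) ->
  (forall i, 0 < Mv 0 i) -> (forall i, 0 < Av 0 i) ->
  (0%:E < T)%E ->
  (* (i) *)
  (forall (thG : R -> 'cV[R]_ng) (thL : R -> 'cV[R]_nl) (w : R -> 'cV[R]_ng),
     dae_solution B gamma Mv Av u p T thG thL w ->
     (forall t, in_I T t -> in_Omega (B^T *m col_mx (thG t) (thL t))) ->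
     reduced_solution B gamma Mv Av u T
       (fun t => B^T *m col_mx (thG t) (thL t)) w)
  /\
  (* (ii) *)
  (forall (eta : R -> 'cV[R]_m) (w : R -> 'cV[R]_ng),
     reduced_solution B gamma Mv Av u T eta w ->
     (exists th0 : 'cV[R]_(ng + nl), eta 0 = B^T *m th0) ->
     0 = p - dsubmx B *m diag_mx gamma *m sinv (eta 0) ->
     exists (thG : R -> 'cV[R]_ng) (thL : R -> 'cV[R]_nl),
       (forall t, in_I T t -> B^T *m col_mx (thG t) (thL t) = eta t) /\
       dae_solution B gamma Mv Av u p T thG thL w).
Proof.
move=> ng0 inc con gpos _ _ T0; split.
- by move=> thG thL w; exact: dae_reduced_solution.
- by move=> eta w sol _; exact: reduced_dae_solution.
Qed.
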